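(* Let $n>2$, $1<k<n$, $G=H_B(n,k)$. For $1\le i\le j\le n-1$ let $P_{i,j}$ be the number of unordered pairs $\{u,v\}$ with $u$ an $i$-vertex of $V_2$, $v$ a $j$-vertex of $V_2$, and $d(u,v)=4$. Then the number of unordered pairs of vertices of $V_2$ at distance $4$ is $$d^{(4)}_{V_2}=\sum_{\substack{1\le i\le j\le n-1\\ k+1\le i+j\le n+k-1}}P_{i,j},$$ where, with all sums over integers $t$ (representing $|u^\dagger\cap v^\dagger|$) satisfying $t\ge 0$, $i+j-n\le t<i+j-k$ and $t<\min\{i,k\}$: - if $i\ne k$, $j\ne k$, $i<j$: $P_{i,j}=\sum_t\binom{n}{i}2^{i-1}2^{j-1}\binom{n-i}{j-t}\binom{i}{t}$; - if $i=k<j$: $P_{i,j}=\sum_t\binom{n}{k}(2^{k-1}-1)2^{j-1}\binom{n-k}{j-t}\binom{k}{t}$; - if $i<j=k$: $P_{i,j}=\sum_t\binom{n}{i}2^{i-1}(2^{k-1}-1)\binom{n-i}{k-t}\binom{i}{t}$; - if $i=j=k$: $P_{i,j}=\frac12\sum_t\binom{n}{k}(2^{k-1}-1)^2\binom{n-k}{k-t}\binom{k}{t}$; - if $i=j\ne k$: $P_{i,j}=\frac12\sum_t\binom{n}{i}2^{2(i-1)}\binom{n-i}{i-t}\binom{i}{t}$.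
   Context: Fix integers $n\ge 2$ and $1\le k<n$ and positive real numbers $x_1<x_2<\dots<x_n$. Let $\mathscr{B}_n=\{\pm x_1,\pm x_2,\dots,\pm x_{n-1},x_n\}$ (so $-x_n\notin\mathscr{B}_n$). Let $\phi(\mathscr{B}_n)$ be the family of all nonempty subsets $S\subseteq\mathscr{B}_n$ whose elements have pairwise distinct absolute values and whose element of largest absolute value is positive. Let $\mathscr{B}_n^+=\{x_1,\dots,x_n\}$, let $V_1$ be the set of all $k$-element subsets of $\mathscr{B}_n^+$, and let $V_2=\phi(\mathscr{B}_n)\setminus V_1$. For $A\in\phi(\mathscr{B}_n)$ put $A^\dagger=\{|a|:a\in A\}$. The bipartite Kneser B type-$k$ graph $H_B(n,k)$ is the simple graph with vertex set $V_1\cup V_2$ in which $X\in V_1$ and $Y\in V_2$ are adjacent if and only if $X\subseteq Y^\dagger$ or $Y^\dagger\subseteq X$, and there are no other edges. An $r$-vertex is a vertex having exactly $r$ elements. $d(u,v)$ denotes graph distance. *)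

From mathcomp Require Import all_boot all_order.
Set Implicit Arguments. Unset Strict Implicit. Unset Printing Implicit Defensive.

(* Signed elements: (i, true) stands for x_(i+1), (i, false) for -x_(i+1).
   The absolute value |a| is (a.1, true); absolute values are ordered like
   the indices (since x_1 < ... < x_n). *)
Definition elt (n : nat) := ('I_n * bool)%type.

(* B_n = {+-x_1, ..., +-x_(n-1), x_n}: all signed elements except -x_n. *)
Definition Bn (n : nat) : {set elt n} :=
  [set a : elt n | a.2 || (val a.1 != n.-1)].

Definition Bplus (n : nat) : {set elt n} := [set a : elt n | a.2].

Definition dagger (n : nat) (S : {set elt n}) : {set elt n} :=
  [set (a.1, true) | a in S].

Definition in_phi (n : nat) (S : {set elt n}) : bool :=
  [&& S != set0, S \subset Bn n,
      [forall a in S, [forall b in S, (a.1 == b.1) ==> (a == b)]]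
    & [forall a in S, [forall b in S, (val b.1 <= val a.1)] ==> a.2]].

Definition V1 (n k : nat) (X : {set elt n}) : bool :=
  (X \subset Bplus n) && (#|X| == k).

Definition V2 (n k : nat) (Y : {set elt n}) : bool :=
  in_phi Y && ~~ V1 k Y.

(* Adjacency of H_B(n,k) on the type {set elt n} (non-vertices are isolated). *)
Definition adjB (n k : nat) (X Y : {set elt n}) : bool :=
  (V1 k X && V2 k Y && ((X \subset dagger Y) || (dagger Y \subset X)))
  || (V1 k Y && V2 k X && ((Y \subset dagger X) || (dagger X \subset Y))).

Fixpoint walkB (n k l : nat) (u v : {set elt n}) : bool :=
  match l with
  | 0 => u == v
  | l'.+1 => [exists w, adjB k u w && walkB k l' w v]
  end.

Definition distB (n k m : nat) (u v : {set elt n}) : bool :=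
  walkB k m u v && [forall l : 'I_m, ~~ walkB k l u v].

Definition Ppairs (n k i j : nat) : {set {set {set elt n}}} :=
  [set E : {set {set elt n}} | [exists u, [exists v,
     [&& E == [set u; v], u != v, V2 k u, V2 k v,
         #|u| == i, #|v| == j & distB k 4 u v]]]].

Definition P (n k i j : nat) : nat := #|Ppairs n k i j|.

Definition d4V2 (n k : nat) : nat :=
  #|[set E : {set {set elt n}} | [exists u, [exists v,
     [&& E == [set u; v], u != v, V2 k u, V2 k v & distB k 4 u v]]]]|.

Definition tsum (n k i j : nat) (F : nat -> nat) : nat :=
  \sum_(0 <= t < minn i k | (i + j <= n + t) && (t + k < i + j)) F t.

From mathcomp Require Import all_boot all_order.
From mathcomp Require Import zify.
Set Implicit Arguments. Unset Strict Implicit. Unset Printing Implicit Defensive.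

(* Vertices of V2 are adjacent only to V1, and a k-set X is adjacent to u
   exactly when X and u^dagger are nested (one contains the other).  Since k < n,
   the set B_n^+ itself lies in V2, so u - X - B_n^+ - Y - v is a walk of length
   4 between any two vertices of V2: their distance is 2 or 4, and it is 4 iff no
   k-subset of B_n^+ is nested with both u^dagger and v^dagger.  For |u| = a,
   |v| = b and |u^dagger :&: v^dagger| = t this happens iff t < k, t < a, t < b and
   t + k < a + b.  Hence the count only depends on the pair (u^dagger, v^dagger)
   of positive sets.  A positive m-set A is the dagger of exactly 2^(m-1) elements
   of phi(B_n) (free signs except on the largest element), one of which (A itself)
   lies in V1 when m = k; and the pairs of positive i- and j-sets meeting in t
   elements number C(n,i) C(i,t) C(n-i,j-t).  An unordered pair {u,v} with
   |u| < |v| is counted once by the ordered pairs, one with |u| = |v| twice. *)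

Definition nested (T : finType) (X A : {set T}) : bool :=
  (X \subset A) || (A \subset X).

Definition separated (k a b t : nat) : bool :=
  [&& t < k, t + k < a + b, t < a & t < b].

Lemma separatedC k a b t : separated k a b t = separated k b a t.
Proof. by rewrite /separated (addnC a b) (andbC (t < a)). Qed.

Lemma separated_range k n i j t : i <= j -> t <= i -> i + j <= n + t ->
  separated k i j t = (t < minn i k) && ((i + j <= n + t) && (t + k < i + j)).
Proof.
move=> ij ti ijt; rewrite /separated leq_min ijt /=.
by apply/and4P/andP => [[-> -> -> _] | [/andP [ti' ->] ->]]; rewrite ?ti' ?(leq_trans ti' ij).
Qed.

Lemma sum_nat_of_bool (T : finType) (P Q : pred T) :
  \sum_(x | P x) (Q x : nat) = #|[set x | P x && Q x]|.
Proof.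
rewrite (eq_bigr (fun x => if Q x then 1 else 0)); last by move=> x _; case: (Q x).
by rewrite -big_mkcondr sum1_card cardsE.
Qed.

Lemma sum_nat_eq_bool (m n c : nat) (F : pred nat) :
  \sum_(m <= t < n | F t) ((t == c) : nat) = [&& m <= c, c < n & F c].
Proof.
rewrite (eq_bigr (fun t => if t == c then 1 else 0)); last by move=> t _; case: (t == c).
by rewrite -big_mkcondr big_nat1_cond_eq andbA; case: ifP.
Qed.

Lemma sum_sum_nat_eq_bool (m n : nat) (lo : nat -> nat) (C : nat -> nat -> bool) a b :
  \sum_(m <= i < n) \sum_(lo i <= j < n | C i j) ((i == a) && (j == b) : nat)
    = [&& m <= a < n, lo a <= b < n & C a b].
Proof.
transitivity (\sum_(m <= i < n) (i == a) * [&& lo i <= b, b < n & C i b]).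
  apply: eq_bigr => i _; rewrite -sum_nat_eq_bool big_distrr /=.
  by apply: eq_bigr => j _; rewrite mulnb.
under eq_bigr => i _ do rewrite mulnbl.
by rewrite -big_mkcond big_nat1_eq; case: ifP => //= _; rewrite andbA.
Qed.

Lemma card_partition_nat (T : finType) (P : pred T) (g : T -> nat) m (F : pred nat) :
  #|[set x | P x & (g x < m) && F (g x)]|
    = \sum_(0 <= t < m | F t) #|[set x | P x && (g x == t)]|.
Proof.
under eq_bigr => t _ do rewrite -sum_nat_of_bool.
rewrite exchange_big /= -sum_nat_of_bool; apply: eq_bigr => x _.
by under eq_bigr => t _ do rewrite eq_sym; rewrite sum_nat_eq_bool.
Qed.

Section Subsets.

Variable T : finType.
Implicit Types A B C D U X : {set T}.

Lemma exists_set_between C D m :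
  C \subset D -> #|C| <= m -> m <= #|D| ->
  exists X : {set T}, [/\ C \subset X, X \subset D & #|X| = m].
Proof.
move=> CD Cm mD.
have : 0 < #|[set S : {set T} | S \subset D :\: C & #|S| == m - #|C|]|.
  by rewrite cards_draws bin_gt0 cardsD (setIidPr CD); lia.
case/card_gt0P => S; rewrite inE subsetD => /andP [/andP [SD disSC] /eqP cS].
exists (C :|: S); split; first exact: subsetUl.
- by rewrite subUset CD SD.
- by rewrite cardsU setIC (disjoint_setI0 disSC) cards0 cS; lia.
Qed.

Lemma exists_subset_card D m : m <= #|D| -> exists2 X : {set T}, X \subset D & #|X| = m.
Proof.
move=> mD; have c0 : #|@set0 T| <= m by rewrite cards0.
by have [X [_ XD cX]] := exists_set_between (sub0set D) c0 mD; exists X.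
Qed.

Lemma exists_nested_kset U A B k :
  A \subset B -> B \subset U -> k <= #|U| ->
  [exists X : {set T}, [&& X \subset U, #|X| == k, nested X A & nested X B]].
Proof.
move=> AB BU kU; have AU := subset_trans AB BU.
have [kA | Ak] := leqP k #|A|.
  have [X XA cX] := exists_subset_card kA.
  apply/existsP; exists X.
  by rewrite /nested (subset_trans XA AU) cX eqxx XA (subset_trans XA AB).
have [kB | Bk] := leqP k #|B|.
  have [X [AX XB cX]] := exists_set_between AB (ltnW Ak) kB.
  by apply/existsP; exists X; rewrite /nested (subset_trans XB BU) cX eqxx AX XB orbT.
have [X [BX XU cX]] := exists_set_between BU (ltnW Bk) kU.
by apply/existsP; exists X; rewrite /nested XU cX eqxx BX (subset_trans AB BX) !orbT.
Qed.

Lemma nested_not_separated A B X :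
  nested X A -> nested X B -> ~~ separated #|X| #|A| #|B| #|A :&: B|.
Proof.
have := cardsUI A B; rewrite /separated => cAB.
case/orP=> hA; case/orP=> hB; apply/negP => /and4P [tX tXab tA tB].
- have : #|X| <= #|A :&: B| by rewrite subset_leq_card // subsetI hA hB.
  lia.
- have /setIidPr BAB : B \subset A := subset_trans hB hA.
  by rewrite BAB ltnn in tB.
- have /setIidPl AAB : A \subset B := subset_trans hA hB.
  by rewrite AAB ltnn in tA.
- have : #|A :|: B| <= #|X| by rewrite subset_leq_card // subUset hA hB.
  lia.
Qed.

Lemma nested_kset_separated U A B k :
  A \subset U -> B \subset U -> k <= #|U| ->
  [exists X : {set T}, [&& X \subset U, #|X| == k, nested X A & nested X B]]
    = ~~ separated k #|A| #|B| #|A :&: B|.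
Proof.
move=> AU BU kU; apply/existsP/idP => [[X /and4P [_ /eqP <- hA hB]] | ].
  exact: nested_not_separated.
rewrite /separated !negb_and -!leqNgt => /or4P [kt | abk | aAB | bAB].
- have [X XAB cX] := exists_subset_card kt.
  have /andP [XA XB] : (X \subset A) && (X \subset B) by rewrite -subsetI.
  by exists X; rewrite /nested (subset_trans XA AU) cX eqxx XA XB.
- have ABU : A :|: B \subset U by rewrite subUset AU BU.
  have ABk : #|A :|: B| <= k by have := cardsUI A B; lia.
  have [X [ABX XU cX]] := exists_set_between ABU ABk kU.
  have /andP [AX BX] : (A \subset X) && (B \subset X) by rewrite -subUset.
  by exists X; rewrite /nested XU cX eqxx AX BX !orbT.
- have AB : A \subset B by apply/setIidPl/eqP; rewrite eqEcard subsetIl.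
  exact/existsP/(exists_nested_kset AB BU kU).
- have BA : B \subset A by apply/setIidPr/eqP; rewrite eqEcard subsetIr.
  have /existsP [X /and4P [XU cX hB hA]] := exists_nested_kset BA AU kU.
  by exists X; rewrite XU cX hA hB.
Qed.

Lemma card_ksets_meeting U A j t : A \subset U -> t <= j ->
  #|[set B : {set T} | [&& B \subset U, #|B| == j & #|A :&: B| == t]]|
    = 'C(#|A|, t) * 'C(#|U| - #|A|, j - t).
Proof.
move=> AU tj.
pose split_at (B : {set T}) := (B :&: A, B :\: A).
have split_inj : injective split_at.
  by move=> B1 B2 [eI eD]; rewrite -(setID B1 A) eI eD setID.
rewrite -(card_imset _ split_inj).
have -> : split_at @: [set B : {set T} | [&& B \subset U, #|B| == j & #|A :&: B| == t]]
    = setX [set S : {set T} | S \subset A & #|S| == t]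
           [set R : {set T} | R \subset U :\: A & #|R| == j - t].
  apply/setP => -[S R]; rewrite !inE /=; apply/imsetP/andP.
    case=> B; rewrite inE => /and3P [BU /eqP cB /eqP cAB] [-> ->].
    by rewrite subsetIr setIC cAB setSD // cardsD setIC cAB cB !eqxx.
  rewrite subsetD => -[/andP [SA /eqP cS] /andP [/andP [RU RA] /eqP cR]].
  have SRA : (S :|: R) :&: A = S by rewrite setIUl (setIidPl SA) (disjoint_setI0 RA) setU0.
  have SRD : (S :|: R) :\: A = R.
    by rewrite setDUl (setDidPl RA) (eqP (_ : S :\: A == set0)) ?set0U ?setD_eq0.
  exists (S :|: R); last by rewrite /split_at SRA SRD.
  rewrite inE subUset (subset_trans SA AU) RU setIC SRA cS eqxx andbT /=.
  rewrite cardsU setIC (disjoint_setI0 (disjointWr SA RA)) cards0 cS cR subn0.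
  by rewrite subnKC ?andbT.
by rewrite cardsX !cards_draws cardsD (setIidPr AU).
Qed.

Lemma card_pairs_meeting U i j t : t <= j ->
  #|[set p : {set T} * {set T} | [&& p.1 \subset U, #|p.1| == i, p.2 \subset U,
       #|p.2| == j & #|p.1 :&: p.2| == t]]|
    = 'C(#|U|, i) * ('C(i, t) * 'C(#|U| - i, j - t)).
Proof.
move=> tj.
transitivity (\sum_(A : {set T} | (A \subset U) && (#|A| == i)) \sum_(B : {set T})
     ([&& B \subset U, #|B| == j & #|A :&: B| == t] : nat)).
  by rewrite pair_big sum_nat_of_bool; apply: eq_card => p; rewrite !inE andbT -!andbA.
rewrite (eq_bigr (fun=> 'C(i, t) * 'C(#|U| - i, j - t))) => [|A /andP [AU /eqP <-]].
  rewrite sum_nat_const -cards_draws; congr (_ * _).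
  by apply: eq_card => A; rewrite !inE.
by rewrite sum_nat_of_bool -card_ksets_meeting.
Qed.

End Subsets.

Lemma eq_set2 (T : finType) (u v u' v' : T) : u' != v' ->
  [set u; v] = [set u'; v'] -> (u = u' /\ v = v') \/ (u = v' /\ v = u').
Proof.
move=> u'v' e; have := set21 u' v'; have := set22 u' v'; rewrite -e.
case/set2P => ev; case/set2P => eu; subst.
all: first [by left | by right | by rewrite eqxx in u'v'].
Qed.

(** * Signed sets and phi(B_n) *)

Definition sign_by n (A N : {set elt n}) : {set elt n} :=
  [set (a.1, a \notin N) | a in A].

Definition negatives n (u : {set elt n}) : {set elt n} :=
  [set (a.1, true) | a in u & ~~ a.2].

Section SignedSets.

Variable n : nat.
Implicit Types (a b : elt n) (A B N u : {set elt n}).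

Lemma in_Bplus a : (a \in Bplus n) = a.2.
Proof. by rewrite inE. Qed.

Lemma Bplus_eq a : a \in Bplus n -> a = (a.1, true).
Proof. by rewrite in_Bplus; case: a => x []. Qed.

Lemma card_Bplus : #|Bplus n| = n.
Proof.
have -> : Bplus n = [set (x, true) | x : 'I_n].
  apply/setP => -[x s]; rewrite inE.
  by apply/idP/imsetP => [/= -> | [y _ [-> ->]]] //; exists x.
by rewrite card_imset ?card_ord // => x y [].
Qed.

Lemma card_Bplus_union_bound A B : A \subset Bplus n -> B \subset Bplus n ->
  #|A| + #|B| <= n + #|A :&: B|.
Proof.
move=> AB BB; rewrite -cardsUI leq_add2r.
by rewrite -[X in _ <= X]card_Bplus subset_leq_card // subUset AB BB.
Qed.

Lemma dagger_subset u : dagger u \subset Bplus n.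
Proof. by apply/subsetP => a /imsetP [b _ ->]; rewrite in_Bplus. Qed.

Lemma dagger_id A : A \subset Bplus n -> dagger A = A.
Proof.
move=> /subsetP AB; apply/setP => a; apply/imsetP/idP => [[b bA ->] | aA].
  by rewrite -Bplus_eq ?AB.
by exists a; rewrite -?Bplus_eq ?AB.
Qed.

Lemma in_phi_inj u : in_phi u -> {in u &, forall a b, a.1 = b.1 -> a = b}.
Proof.
case/and4P => _ _ /forall_inP uinj _ a b au bu e.
by move/forall_inP: (uinj a au) => /(_ b bu); rewrite e eqxx => /eqP.
Qed.

Lemma card_dagger u : in_phi u -> #|dagger u| = #|u|.
Proof.
move=> uphi; rewrite card_in_imset // => a b au bu [e].
exact: in_phi_inj uphi a b au bu e.
Qed.

Lemma in_phi_Bplus A : A \subset Bplus n -> A != set0 -> in_phi A.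
Proof.
move=> /subsetP AB A0; apply/and4P; split => //.
- by apply/subsetP => a /AB; rewrite !inE => ->.
- apply/forall_inP => a aA; apply/forall_inP => b bA; apply/implyP => /eqP e.
  by rewrite (Bplus_eq (AB _ aA)) (Bplus_eq (AB _ bA)) e.
- by apply/forall_inP => a /AB; rewrite in_Bplus => ->; rewrite implybT.
Qed.

Lemma mem_negatives u c : in_phi u -> c \in u -> ((c.1, true) \in negatives u) = ~~ c.2.
Proof.
move=> uphi cu; apply/imsetP/idP => [[d] | nc]; last by exists c; rewrite ?inE ?cu.
by rewrite inE => /andP [du nd] [e]; rewrite -(in_phi_inj uphi du cu (esym e)).
Qed.

Lemma sign_by_negatives u : in_phi u -> sign_by (dagger u) (negatives u) = u.
Proof.
move=> uphi; rewrite /sign_by /dagger -imset_comp -[RHS]imset_id.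
by apply: eq_in_imset => c cu /=; rewrite mem_negatives // negbK; case: c cu.
Qed.

End SignedSets.

Section PhiFibre.

Variables (n : nat) (A : {set elt n}) (M : elt n).
Hypotheses (AB : A \subset Bplus n) (MA : M \in A)
  (Mmax : forall b, b \in A -> val b.1 <= val M.1).
Implicit Types (a : elt n) (N u : {set elt n}).

Lemma Bplus_eq_max a : a \in A -> val M.1 <= val a.1 -> a = M.
Proof.
move=> aA le; rewrite (Bplus_eq (subsetP AB _ aA)) (Bplus_eq (subsetP AB _ MA)).
by congr (_, _); apply/val_inj/eqP; rewrite eqn_leq le Mmax.
Qed.

Lemma mem_sign_by_neg N a : a \in A -> ((a.1, false) \in sign_by A N) = (a \in N).
Proof.
move=> aA; apply/imsetP/idP => [[b bA [e1 e2]] | aN]; last by exists a; rewrite ?aN.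
have -> : a = b by rewrite (Bplus_eq (subsetP AB _ aA)) (Bplus_eq (subsetP AB _ bA)) e1.
by move: e2; case: (b \in N).
Qed.

Lemma sign_by_inj : {in powerset A &, injective (sign_by A)}.
Proof.
move=> N1 N2; rewrite !powersetE => N1A N2A e; apply/setP => x.
have [xA | xA] := boolP (x \in A); first by rewrite -!(mem_sign_by_neg _ xA) e.
by rewrite (contraNF (subsetP N1A x) xA) (contraNF (subsetP N2A x) xA).
Qed.

Lemma dagger_sign_by N : dagger (sign_by A N) = A.
Proof.
rewrite /dagger /sign_by -imset_comp -[RHS]imset_id.
by apply: eq_in_imset => a aA /=; rewrite -Bplus_eq ?(subsetP AB).
Qed.

Lemma in_phi_sign_by N : M \notin N -> in_phi (sign_by A N).
Proof.
move=> MN; have signM : (M.1, M \notin N) \in sign_by A N by apply/imsetP; exists M.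
apply/and4P; split.
- by apply/set0Pn; exists (M.1, M \notin N).
- apply/subsetP => _ /imsetP [a aA ->]; rewrite inE /=.
  (* an element of index n-1 is necessarily the maximum M, which stays positive *)
  have [alast | ] := eqVneq (val a.1) n.-1; last by rewrite orbT.
  by rewrite (Bplus_eq_max aA) ?MN // alast -ltnS (leq_trans (ltn_ord M.1)) ?leqSpred.
- apply/forall_inP => _ /imsetP [a aA ->]; apply/forall_inP => _ /imsetP [b bA ->].
  apply/implyP => /= /eqP e.
  by rewrite (Bplus_eq (subsetP AB _ aA)) (Bplus_eq (subsetP AB _ bA)) e.
- apply/forall_inP => _ /imsetP [a aA ->].
  by apply/implyP => /forall_inP /(_ _ signM) /= le; rewrite (Bplus_eq_max aA le).
Qed.

Lemma negatives_subset u : in_phi u -> dagger u = A -> negatives u \subset A :\ M.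
Proof.
move=> uphi uA; apply/subsetP => x /imsetP [c]; rewrite inE => /andP [cu nc] ->.
have cA : (c.1, true) \in A by rewrite -uA; apply/imsetP; exists c.
rewrite !inE cA andbT; apply: contra nc => /eqP cM.
case/and4P: uphi => _ _ _ /forall_inP /(_ c cu) /implyP; apply.
apply/forall_inP => d du; have := @Mmax (d.1, true); rewrite -cM; apply.
by rewrite -uA; apply/imsetP; exists d.
Qed.

Lemma card_phi_fibre : #|[set u | in_phi u && (dagger u == A)]| = 2 ^ (#|A| - 1).
Proof.
have -> : [set u | in_phi u && (dagger u == A)] = sign_by A @: powerset (A :\ M).
  apply/setP => u; rewrite inE; apply/andP/imsetP => [[uphi /eqP uA] | [N]].
    exists (negatives u); first by rewrite powersetE negatives_subset.
    by rewrite -uA sign_by_negatives.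
  rewrite powersetE => NAM ->; rewrite dagger_sign_by eqxx in_phi_sign_by //.
  by apply/negP => /(subsetP NAM); rewrite !inE eqxx.
rewrite card_in_imset ?card_powerset ?(cardsD1 M A) ?MA ?subn1 //.
by apply: sub_in2 sign_by_inj; apply/subsetP; rewrite powersetS subsetDl.
Qed.

End PhiFibre.

(** * The graph H_B(n,k) *)

Definition fibre_size (k m : nat) : nat := 2 ^ (m - 1) - (m == k).

Definition far_pairs n k i j : {set {set elt n} * {set elt n}} :=
  [set p | [&& V2 k p.1, #|p.1| == i, V2 k p.2, #|p.2| == j & distB k 4 p.1 p.2]].

Definition far_sets n k : {set {set {set elt n}}} :=
  [set E | [exists u, [exists v,
     [&& E == [set u; v], u != v, V2 k u, V2 k v & distB k 4 u v]]]].

Section Graph.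

Variables n k : nat.
Implicit Types (A B u v w X : {set elt n}).

Lemma V2_notV1 u : V2 k u -> ~~ V1 k u.
Proof. by case/andP. Qed.

Lemma V2_card_dagger u : V2 k u -> #|dagger u| = #|u|.
Proof. by case/andP => /card_dagger. Qed.

Lemma card_V2_fibre A : A \subset Bplus n -> A != set0 ->
  #|[set u | V2 k u && (dagger u == A)]| = fibre_size k #|A|.
Proof.
move=> AB /set0Pn [a0 a0A].
have [M MA Mmax] := @arg_maxnP _ a0 (mem A) (fun a : elt n => val a.1) a0A.
rewrite /fibre_size -(card_phi_fibre AB MA Mmax).
set phiA := [set u | in_phi u && (dagger u == A)].
have -> : [set u | V2 k u && (dagger u == A)] = phiA :\: [set u | V1 k u].
  by apply/setP => u; rewrite !inE /V2; case: (in_phi u); case: (V1 k u).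
rewrite cardsD; congr (_ - _).
have -> : phiA :&: [set u | V1 k u] = if #|A| == k then [set A] else set0.
  apply/setP => u; rewrite !inE; apply/andP/idP.
    case=> /andP [_ /eqP uA] /andP [uB /eqP cu].
    by move: uA; rewrite dagger_id // => uA; rewrite -uA cu eqxx inE.
  have A0 : A != set0 by apply/set0Pn; exists a0.
  case: eqP => [cA | _]; rewrite inE // => /eqP ->.
  by rewrite in_phi_Bplus // dagger_id // /V1 AB cA !eqxx.
by case: eqP; rewrite ?cards1 ?cards0.
Qed.

Lemma card_V2_pairs (Q : rel {set elt n}) i j : 0 < i -> 0 < j ->
  #|[set p : {set elt n} * {set elt n} | [&& V2 k p.1, #|p.1| == i, V2 k p.2,
       #|p.2| == j & Q (dagger p.1) (dagger p.2)]]|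
    = fibre_size k i * fibre_size k j *
      #|[set q : {set elt n} * {set elt n} | [&& q.1 \subset Bplus n, #|q.1| == i,
           q.2 \subset Bplus n, #|q.2| == j & Q q.1 q.2]]|.
Proof.
move=> i0 j0; set Pos := (X in _ = _ * #|X|).
pose fibre A := [set u | V2 k u && (dagger u == A)].
rewrite -sum1dep_card (partition_big (fun p => (dagger p.1, dagger p.2)) (mem Pos)); last first.
  move=> [u v] /and5P [uV2 cu vV2 cv uvQ].
  by rewrite !inE /= !dagger_subset !V2_card_dagger ?cu ?cv.
rewrite (eq_bigr (fun=> fibre_size k i * fibre_size k j)) => [|[A B]].
  by rewrite sum_nat_const mulnC.
rewrite /Pos !inE /= => /and5P [AB /eqP cA BB /eqP cB ABQ].
have fA : #|fibre A| = fibre_size k i by rewrite card_V2_fibre ?cA // -card_gt0 cA.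
have fB : #|fibre B| = fibre_size k j by rewrite card_V2_fibre ?cB // -card_gt0 cB.
rewrite sum1dep_card -fA -fB -cardsX.
apply: eq_card => -[u v]; rewrite !inE /= xpair_eqE.
apply/and3P/and3P => [[/and5P [-> _ -> _ _] -> ->] // | [/andP [uV2 /eqP uA] vV2 /eqP vB]].
split; rewrite ?uA ?vB //.
by rewrite uV2 vV2 -(V2_card_dagger uV2) -(V2_card_dagger vV2) uA vB cA cB ABQ !eqxx.
Qed.

Lemma adjB_V2l u w : V2 k u -> adjB k u w = V1 k w && nested w (dagger u).
Proof. by move=> uV2; rewrite /adjB (negbTE (V2_notV1 uV2)) uV2 /= andbT. Qed.

Lemma adjB_V2r w v : V2 k v -> adjB k w v = V1 k w && nested w (dagger v).
Proof. by move=> vV2; rewrite /adjB (negbTE (V2_notV1 vV2)) vV2 /= andbT orbF. Qed.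

Lemma adjB_V1 u w : V1 k u -> adjB k u w -> V2 k w.
Proof.
move=> uV1; have uV2 : V2 k u = false by rewrite /V2 uV1 andbF.
by rewrite /adjB uV1 uV2 !andbF orbF => /andP [/andP []].
Qed.

Lemma V2_Bplus : 0 < n -> k != n -> V2 k (Bplus n).
Proof.
move=> n0 kn; rewrite /V2 /V1 card_Bplus eq_sym (negbTE kn) andbF andbT.
by rewrite in_phi_Bplus // -card_gt0 card_Bplus.
Qed.

Lemma walkB1_V2 u v : V2 k u -> V2 k v -> ~~ walkB k 1 u v.
Proof.
move=> uV2 vV2; apply/existsP => -[w /andP [uw /eqP wv]].
by move: uw; rewrite wv adjB_V2l // (negbTE (V2_notV1 vV2)).
Qed.

Lemma walkB3_V2 u v : V2 k u -> V2 k v -> ~~ walkB k 3 u v.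
Proof.
move=> uV2 vV2; apply/existsP => -[w1 /andP [uw1 /existsP [w2 /andP [w1w2
  /existsP [w3 /andP [w2w3 /eqP w3v]]]]]].
have /andP [w1V1 _] : V1 k w1 && nested w1 (dagger u) by rewrite -adjB_V2l.
by move: w2w3; rewrite w3v adjB_V2l ?(adjB_V1 w1V1) // (negbTE (V2_notV1 vV2)).
Qed.

Lemma walkB2_V2 u v : V2 k u -> V2 k v ->
  walkB k 2 u v = [exists X : {set elt n},
    [&& X \subset Bplus n, #|X| == k, nested X (dagger u) & nested X (dagger v)]].
Proof.
move=> uV2 vV2; apply/existsP/existsP => -[X].
  case/andP => uX /existsP [w /andP [Xw /eqP wv]]; exists X.
  move: uX Xw; rewrite wv adjB_V2l // adjB_V2r // /V1.
  by case/andP => /andP [-> ->] -> /andP [_ ->].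
case/and4P => XB cX Xu Xv; exists X; rewrite adjB_V2l // /V1 XB cX Xu.
by apply/existsP; exists v; rewrite adjB_V2r // /V1 XB cX Xv eqxx.
Qed.

Lemma walkB2_separated u v : k <= n -> V2 k u -> V2 k v ->
  walkB k 2 u v = ~~ separated k #|u| #|v| #|dagger u :&: dagger v|.
Proof.
move=> kn uV2 vV2; have [/andP [uphi _] /andP [vphi _]] := (uV2, vV2).
rewrite walkB2_V2 // nested_kset_separated ?dagger_subset ?card_Bplus //.
by rewrite !card_dagger.
Qed.

Lemma exists_V1_nested w : k <= n -> [exists X, V1 k X && nested X (dagger w)].
Proof.
move=> kn; rewrite -(card_Bplus n) in kn.
have /existsP [X /and4P [XB cX wX _]] :=
  exists_nested_kset (subxx (dagger w)) (dagger_subset w) kn.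
by apply/existsP; exists X; rewrite /V1 XB cX wX.
Qed.

End Graph.

(** * Pairs at distance 4 *)

Section FarPairs.

Variables n k : nat.
Hypotheses (n0 : 0 < n) (kn : k < n).
Implicit Types (u v : {set elt n}) (E : {set {set elt n}}).

Lemma walkB4_V2 u v : V2 k u -> V2 k v -> walkB k 4 u v.
Proof.
move=> uV2 vV2; have BV2 := V2_Bplus n0 (negbT (ltn_eqF kn)).
have /existsP [X /andP [XV1 uX]] := exists_V1_nested u (ltnW kn).
have /existsP [Y /andP [YV1 vY]] := exists_V1_nested v (ltnW kn).
have nested_Bplus Z : V1 k Z -> nested Z (dagger (Bplus n)).
  by case/andP => ZB _; rewrite dagger_id // /nested ZB.
apply/existsP; exists X; rewrite adjB_V2l // XV1 uX /=.
apply/existsP; exists (Bplus n); rewrite adjB_V2r // XV1 nested_Bplus //=.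
apply/existsP; exists Y; rewrite adjB_V2l // YV1 nested_Bplus //=.
by apply/existsP; exists v; rewrite adjB_V2r // YV1 vY eqxx.
Qed.

Lemma distB4_separated u v : V2 k u -> V2 k v ->
  distB k 4 u v = separated k #|u| #|v| #|dagger u :&: dagger v|.
Proof.
move=> uV2 vV2.
rewrite -[RHS]negbK -walkB2_separated ?(ltnW kn) // /distB walkB4_V2 //=.
apply/forallP/idP => [/(_ (Ordinal (isT : 2 < 4))) // | not2 [[|[|[|[|l]]]] //= _]].
- apply: contra not2 => /eqP <-; change (walkB k 2 u u); rewrite walkB2_V2 //.
  have /existsP [X /andP [/andP [XB cX] uX]] := exists_V1_nested u (ltnW kn).
  by apply/existsP; exists X; rewrite XB cX uX.
- exact: walkB1_V2.
- exact: walkB3_V2.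
Qed.

Lemma distB4_neq u v : distB k 4 u v -> u != v.
Proof. by case/andP => _ /forallP /(_ (Ordinal (isT : 0 < 4))). Qed.

Lemma distB4C u v : V2 k u -> V2 k v -> distB k 4 u v = distB k 4 v u.
Proof. by move=> uV2 vV2; rewrite !distB4_separated // separatedC setIC. Qed.

Lemma card_far_pairs i j : 0 < i -> i <= j ->
  #|far_pairs n k i j| = tsum n k i j (fun t =>
     'C(n, i) * fibre_size k i * fibre_size k j * 'C(n - i, j - t) * 'C(i, t)).
Proof.
move=> i0 ij; have j0 : 0 < j := leq_trans i0 ij.
have -> : far_pairs n k i j = [set p : {set elt n} * {set elt n} | [&& V2 k p.1,
    #|p.1| == i, V2 k p.2, #|p.2| == j & separated k #|dagger p.1| #|dagger p.2|
    #|dagger p.1 :&: dagger p.2|]].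
  apply/setP => -[u v]; rewrite !inE /=.
  have [uV2 | //] := boolP (V2 k u); have [vV2 | //] := boolP (V2 k v).
  by rewrite distB4_separated // (V2_card_dagger uV2) (V2_card_dagger vV2).
rewrite (@card_V2_pairs n k (fun A B => separated k #|A| #|B| #|A :&: B|)) //.
rewrite /tsum.
pose pos_sizes (q : {set elt n} * {set elt n}) :=
  [&& q.1 \subset Bplus n, #|q.1| == i, q.2 \subset Bplus n & #|q.2| == j].
pose meet (q : {set elt n} * {set elt n}) := #|q.1 :&: q.2|.
transitivity (fibre_size k i * fibre_size k j * #|[set q | pos_sizes q &
    (meet q < minn i k) && ((i + j <= n + meet q) && (meet q + k < i + j))]|).
  congr (_ * _); apply: eq_card => -[A B]; rewrite !inE /pos_sizes /meet /= -!andbA.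
  have [AB | //] := boolP (A \subset Bplus n); have [BB | //] := boolP (B \subset Bplus n).
  case: eqP => // cA; case: eqP => //= cB.
  have := card_Bplus_union_bound AB BB; have := subset_leq_card (subsetIl A B).
  by rewrite cA cB => tA ubound; rewrite (separated_range k (n := n)).
rewrite (card_partition_nat pos_sizes meet (minn i k)
  (fun t => (i + j <= n + t) && (t + k < i + j))) big_distrr.
rewrite big_nat_cond [RHS]big_nat_cond; apply: eq_bigr => t /andP [/andP [_ tik] _].
have tj : t <= j by move: tik; rewrite leq_min => /andP [ti _]; lia.
have -> : #|[set q | pos_sizes q && (meet q == t)]| = 'C(n, i) * ('C(i, t) * 'C(n - i, j - t)).
  rewrite -[X in 'C(X, i)](card_Bplus n) -[X in X - i](card_Bplus n) -card_pairs_meeting //.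
  by apply: eq_card => q; rewrite !inE -!andbA.
by rewrite /= !mulnA; lia.
Qed.

Lemma mem_far_pairsC i j u v :
  ((u, v) \in far_pairs n k i j) = ((v, u) \in far_pairs n k j i).
Proof.
by rewrite !inE /=; apply/and5P/and5P => -[uV2 cu vV2 cv d]; split; rewrite // distB4C.
Qed.

Lemma Ppairs_far i j : Ppairs n k i j = [set [set p.1; p.2] | p in far_pairs n k i j].
Proof.
apply/setP => E; rewrite inE; apply/existsP/imsetP.
  case=> u /existsP [v /and5P [/eqP -> _ uV2 vV2 /and3P [cu cv d]]].
  by exists (u, v); rewrite // inE uV2 vV2 cu cv d.
case=> -[u v]; rewrite inE /= => /and5P [uV2 cu vV2 cv d] ->.
by exists u; apply/existsP; exists v; rewrite eqxx (distB4_neq d) uV2 vV2 cu cv d.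
Qed.

Lemma P_far_pairs i j : i < j -> P n k i j = #|far_pairs n k i j|.
Proof.
move=> ij; rewrite /P Ppairs_far card_in_imset // => -[u v] [u' v'].
rewrite !inE /= => /and5P [_ cu _ cv _] /and5P [_ cu' _ cv' d'] e.
case: (eq_set2 (distB4_neq d') e) => -[e1 e2]; first by rewrite e1 e2.
by move: ij cu cv'; rewrite e1 => ? /eqP ? /eqP ?; lia.
Qed.

Lemma P_diag_far_pairs i : 2 * P n k i i = #|far_pairs n k i i|.
Proof.
rewrite /P Ppairs_far; set O := far_pairs n k i i.
pose f (p : {set elt n} * {set elt n}) := [set p.1; p.2].
rewrite -[#|O|]sum1_card (partition_big f (mem (f @: O))) => [|p pO]; last exact: imset_f.
rewrite (eq_bigr (fun=> 2)) => [|_ /imsetP [[u v] uvO ->]].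
  by rewrite sum_nat_const mulnC.
have vuO : (v, u) \in O by rewrite -mem_far_pairsC.
have uv : u != v by move: uvO; rewrite inE => /and5P [_ _ _ _ /distB4_neq].
rewrite sum1dep_card (_ : [set p | _] = [set (u, v); (v, u)]).
  by rewrite cards2 xpair_eqE (negbTE uv).
apply/setP => -[x y]; rewrite in_set in_set2 /f /=; apply/andP/orP => [[_ /eqP e] | ].
  by case: (eq_set2 uv e) => -[-> ->]; [left | right].
by case=> /eqP [-> ->]; rewrite ?uvO ?vuO // setUC.
Qed.

Lemma far_sizes u v : V2 k u -> V2 k v -> distB k 4 u v ->
  [/\ 0 < #|u|, #|u| < n, #|v| < n, k < #|u| + #|v| & #|u| + #|v| <= n + k - 1].
Proof.
move=> uV2 vV2; rewrite distB4_separated // /separated => /and4P [tk tkuv tu tv].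
have := card_Bplus_union_bound (dagger_subset u) (dagger_subset v).
by rewrite (V2_card_dagger uV2) (V2_card_dagger vV2) => ubound; split; lia.
Qed.

Lemma mem_Ppairs u v i j : V2 k u -> V2 k v -> distB k 4 u v ->
  #|u| <= #|v| -> i <= j -> ([set u; v] \in Ppairs n k i j) = (#|u| == i) && (#|v| == j).
Proof.
move=> uV2 vV2 d uv ij; rewrite Ppairs_far; apply/imsetP/andP => [[[x y]] | [cu cv]].
  rewrite inE /= => /and5P [_ /eqP cx _ /eqP cy dxy] e.
  case: (eq_set2 (distB4_neq dxy) e) => -[eu ev]; rewrite eu ev cx cy ?eqxx //.
  by move: uv; rewrite eu ev cx cy => ji; split; apply/eqP; lia.
by exists (u, v); rewrite // inE uV2 vV2 cu cv d.
Qed.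

Lemma sum_mem_Ppairs E :
  \sum_(1 <= i < n) \sum_(i <= j < n | (k.+1 <= i + j) && (i + j <= n + k - 1))
     ((E \in Ppairs n k i j) : nat) = (E \in far_sets n k).
Proof.
have [EF | nEF] := boolP (E \in far_sets n k); last first.
  apply: big1 => i _; apply: big1 => j _; apply/eqP; rewrite eqb0; apply: contra nEF.
  rewrite !inE => /existsP [u /existsP [v /and5P [e ne uV2 vV2 /and3P [_ _ d]]]].
  by apply/existsP; exists u; apply/existsP; exists v; rewrite e ne uV2 vV2 d.
have [u [v [-> uV2 vV2 d uv]]] : exists u v,
    [/\ E = [set u; v], V2 k u, V2 k v, distB k 4 u v & #|u| <= #|v|].
  move: EF; rewrite inE => /existsP [x /existsP [y /and5P [/eqP -> _ xV2 yV2 dxy]]].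
  have [xy | /ltnW yx] := leqP #|x| #|y|; first by exists x, y.
  by exists y, x; rewrite setUC -distB4C.
have [u0 un vn kuv uvn] := far_sizes uV2 vV2 d.
transitivity (\sum_(1 <= i < n) \sum_(i <= j < n | (k.+1 <= i + j) && (i + j <= n + k - 1))
   ((i == #|u|) && (j == #|v|) : nat)).
  apply: eq_bigr => i _; rewrite big_nat_cond [RHS]big_nat_cond.
  apply: eq_bigr => j /andP [/andP [ij _] _].
  by rewrite mem_Ppairs // ![_ == #|_|]eq_sym.
by rewrite sum_sum_nat_eq_bool u0 un uv vn kuv uvn.
Qed.

Lemma d4V2_sum_P :
  d4V2 n k = \sum_(1 <= i < n) \sum_(i <= j < n | (k.+1 <= i + j) && (i + j <= n + k - 1))
       P n k i j.
Proof.
have card_sum (S : {set {set {set elt n}}}) : #|S| = \sum_E ((E \in S) : nat).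
  by rewrite sum_nat_of_bool; apply: eq_card => E; rewrite inE.
rewrite -[d4V2 n k]/#|far_sets n k| card_sum.
under eq_bigr => E _ do rewrite -sum_mem_Ppairs.
rewrite exchange_big; apply: eq_bigr => i _; rewrite exchange_big; apply: eq_bigr => j _.
by rewrite /P card_sum.
Qed.

End FarPairs.

Theorem mainTheorem16 (n k : nat) :
  2 < n -> 1 < k -> k < n ->
  d4V2 n k =
    \sum_(1 <= i < n) \sum_(i <= j < n | (k.+1 <= i + j) && (i + j <= n + k - 1))
       P n k i j
  /\
  (forall i j, 1 <= i -> i <= j -> j <= n - 1 ->
     k.+1 <= i + j -> i + j <= n + k - 1 ->
     [/\ (i != k -> j != k -> i < j ->
            P n k i j = tsum n k i j (fun t =>
              'C(n, i) * 2 ^ (i - 1) * 2 ^ (j - 1) * 'C(n - i, j - t) * 'C(i, t))),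
         (i = k -> k < j ->
            P n k i j = tsum n k i j (fun t =>
              'C(n, k) * (2 ^ (k - 1) - 1) * 2 ^ (j - 1) * 'C(n - k, j - t) * 'C(k, t))),
         (i < j -> j = k ->
            P n k i j = tsum n k i j (fun t =>
              'C(n, i) * 2 ^ (i - 1) * (2 ^ (k - 1) - 1) * 'C(n - i, k - t) * 'C(i, t))),
         (i = j -> j = k ->
            2 * P n k i j = tsum n k i j (fun t =>
              'C(n, k) * (2 ^ (k - 1) - 1) ^ 2 * 'C(n - k, k - t) * 'C(k, t)))
       & (i = j -> i != k ->
            2 * P n k i j = tsum n k i j (fun t =>
              'C(n, i) * 2 ^ (2 * (i - 1)) * 'C(n - i, i - t) * 'C(i, t)))]).
Proof.
move=> n2 _ kn; have n0 : 0 < n := ltn_trans (isT : 0 < 2) n2.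
split; first exact: d4V2_sum_P.
move=> i j i0 ij _ _ _; split.
- move=> /negbTE ik /negbTE jk ltij.
  by rewrite P_far_pairs // card_far_pairs // /fibre_size ik jk !subn0.
- move=> ik kj; subst i.
  by rewrite P_far_pairs // card_far_pairs // /fibre_size eqxx (gtn_eqF kj) subn0.
- move=> ltij jk; subst j.
  by rewrite P_far_pairs // card_far_pairs // /fibre_size eqxx (ltn_eqF ltij) subn0.
- move=> <- ik; subst i.
  by rewrite P_diag_far_pairs // card_far_pairs // /fibre_size eqxx -mulnn mulnA.
- move=> <- /negbTE ik.
  by rewrite P_diag_far_pairs // card_far_pairs // /fibre_size ik subn0 mul2n -addnn expnD mulnA.
Qed.
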